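(* For every acute triangle $ABC$ in which $BC$ is strictly the shortest side ($a<b$ and $a<c$), the distances from vertex $A$ satisfy $$AX_3<AX_9<AX_{10}<AX_2<AX_1<AX_6<AX_4<AX_{19}<AX_{16}.$$ Equivalently, in the vertex order, $X_3\prec X_9\prec X_{10}\prec X_2\prec X_1\prec X_6\prec X_4\prec X_{19}\prec X_{16}$.
   Context: $X_n$ denotes the $n$-th triangle center listed in Kimberling's Encyclopedia of Triangle Centers (ETC), given by barycentric coordinates in terms of $a=BC$, $b=CA$, $c=AB$. The vertex order is defined by: $P\prec Q$ if $P$ is closer to $A$ than $Q$ in every acute triangle $ABC$ with shortest side $BC$ (i.e. $a<b$, $a<c$). *)

From mathcomp Require Import all_boot all_order all_algebra.
Set Implicit Arguments. Unset Strict Implicit. Unset Printing Implicit Defensive.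
Import Order.TTheory GRing.Theory Num.Theory.
Local Open Scope ring_scope.

Section Triangle.
Variable R : rcfType.

Definition point := (R * R)%type.

Definition dist (P Q : point) : R :=
  Num.sqrt ((P.1 - Q.1) ^+ 2 + (P.2 - Q.2) ^+ 2).

Definition dotv (O P Q : point) : R :=
  (P.1 - O.1) * (Q.1 - O.1) + (P.2 - O.2) * (Q.2 - O.2).

Definition crossv (O P Q : point) : R :=
  (P.1 - O.1) * (Q.2 - O.2) - (P.2 - O.2) * (Q.1 - O.1).

Definition acute_triangle (A B C : point) : Prop :=
  [/\ crossv A B C != 0, 0 < dotv A B C, 0 < dotv B C A & 0 < dotv C A B].

(* Point with homogeneous barycentric coordinates f(a,b,c) : f(b,c,a) : f(c,a,b)
   (ETC convention), where a = BC, b = CA, c = AB. *)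
Definition bary (f : R -> R -> R -> R) (A B C : point) : point :=
  let a := dist B C in let b := dist C A in let c := dist A B in
  let u := f a b c in let v := f b c a in let w := f c a b in
  let s := u + v + w in
  ((u * A.1 + v * B.1 + w * C.1) / s, (u * A.2 + v * B.2 + w * C.2) / s).

(* S = twice the area, from Heron's formula; SA = (b^2 + c^2 - a^2)/2 *)
Definition Sarea (a b c : R) : R :=
  Num.sqrt (2 * a^+2 * b^+2 + 2 * b^+2 * c^+2 + 2 * c^+2 * a^+2
            - a^+4 - b^+4 - c^+4) / 2.
Definition SA (a b c : R) : R := (b ^+ 2 + c ^+ 2 - a ^+ 2) / 2.

(* first barycentric coordinates (triangle center functions) from ETC *)
Definition X1 (a b c : R) : R := a.                                   (* incenter *)
Definition X2 (a b c : R) : R := 1.                                   (* centroid *)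
Definition X3 (a b c : R) : R := a ^+ 2 * (b ^+ 2 + c ^+ 2 - a ^+ 2). (* circumcenter *)
Definition X4 (a b c : R) : R := (b ^+ 2 + c ^+ 2 - a ^+ 2)^-1.      (* orthocenter *)
Definition X6 (a b c : R) : R := a ^+ 2.                              (* symmedian point *)
Definition X9 (a b c : R) : R := a * (b + c - a).                     (* Mittenpunkt *)
Definition X10 (a b c : R) : R := b + c.                              (* Spieker center *)
Definition X16 (a b c : R) : R :=                                     (* 2nd isodynamic point *)
  a ^+ 2 * (Sarea a b c - Num.sqrt 3 * SA a b c).  (* ~ sin A sin(A - pi/3) *)
Definition X19 (a b c : R) : R := a / (b ^+ 2 + c ^+ 2 - a ^+ 2).    (* Clawson point *)

End Triangle.

(* The point with barycentrics (u : v : w) lies at squared distance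
   (v^2 c^2 + w^2 b^2 + v w (b^2 + c^2 - a^2)) / (u + v + w)^2 from A, so each
   AX_i^2 is an explicit function of the sides, symmetric in b and c; for X16 it
   is 2 b^2 c^2 / (a^2 + b^2 + c^2 - 4 sqrt 3 area).  Assume b <= c and write
   a = t + s, b = t + s + k, c = t + 2s + k with t, k > 0 and s >= 0, and
   m = a^2 + b^2 - c^2 > 0 (the angle at C is acute).  After clearing
   denominators every comparison AX_i^2 < AX_j^2 becomes the positivity of a
   polynomial with nonnegative coefficients in t, s, k, m.  For X19 < X16 the
   radical is first bounded using ab + bc + ca > 4 sqrt 3 area. *)

From mathcomp Require Import all_boot all_order all_algebra.
From mathcomp Require Import ring lra.
Set Implicit Arguments. Unset Strict Implicit. Unset Printing Implicit Defensive.
Import Order.TTheory GRing.Theory Num.Theory.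
Local Open Scope ring_scope.

Section BarycentricDistance.
Variable R : rcfType.
Implicit Types (P Q : point R) (a b c u v w : R).

Definition sqdistA a b c u v w : R :=
  (v ^+ 2 * c ^+ 2 + w ^+ 2 * b ^+ 2 + v * w * (b ^+ 2 + c ^+ 2 - a ^+ 2))
  / (u + v + w) ^+ 2.

Lemma dist_sqr P Q : dist P Q ^+ 2 = (P.1 - Q.1) ^+ 2 + (P.2 - Q.2) ^+ 2.
Proof. by rewrite sqr_sqrtr // addr_ge0 ?sqr_ge0. Qed.

Variables (A B C : point R) (f : R -> R -> R -> R).
Local Notation a := (dist B C).
Local Notation b := (dist C A).
Local Notation c := (dist A B).

Lemma dist_bary : f a b c + f b c a + f c a b != 0 ->
  dist A (bary f A B C) = Num.sqrt (sqdistA a b c (f a b c) (f b c a) (f c a b)).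
Proof.
rewrite /bary /sqdistA /=.
have := dist_sqr B C; have := dist_sqr C A; have := dist_sqr A B.
move: a b c => a' b' c' ec eb ea.
move: (f a' b' c') (f b' c' a') (f c' a' b') => u v w s_neq0.
rewrite {1}/dist ea eb ec; congr Num.sqrt => /=.
by field.
Qed.

End BarycentricDistance.

Section ClosedForms.
Variable R : rcfType.
Implicit Types a b c : R.

(* 16 times the squared area, as under the square root in [Sarea]. *)
Definition heron a b c : R :=
  2 * a ^+ 2 * b ^+ 2 + 2 * b ^+ 2 * c ^+ 2 + 2 * c ^+ 2 * a ^+ 2
  - a ^+ 4 - b ^+ 4 - c ^+ 4.

(* [2 * SA a b c], i.e. 2bc cos A. *)
Definition twoSA a b c : R := b ^+ 2 + c ^+ 2 - a ^+ 2.

Definition AX1sq a b c : R := b * c * (b + c - a) / (a + b + c).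
Definition AX2sq a b c : R := (2 * b ^+ 2 + 2 * c ^+ 2 - a ^+ 2) / 9.
Definition AX3sq a b c : R := a ^+ 2 * b ^+ 2 * c ^+ 2 / heron a b c.
Definition AX4sq a b c : R := a ^+ 2 * twoSA a b c ^+ 2 / heron a b c.
Definition AX6sq a b c : R :=
  b ^+ 2 * c ^+ 2 * (2 * b ^+ 2 + 2 * c ^+ 2 - a ^+ 2) / (a ^+ 2 + b ^+ 2 + c ^+ 2) ^+ 2.
Definition AX9sq a b c : R :=
  b * c * (2 * a ^+ 2 * (b ^+ 2 + c ^+ 2) - a ^+ 4 - (b - c) ^+ 4)
  / (a * (b + c - a) + b * (c + a - b) + c * (a + b - c)) ^+ 2.
Definition AX10sq a b c : R :=
  (b ^+ 3 + c ^+ 3 + 2 * a * (b ^+ 2 + c ^+ 2) - a * b * c - a ^+ 3) / (4 * (a + b + c)).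
Definition AX16sq a b c : R :=
  2 * b ^+ 2 * c ^+ 2 / (a ^+ 2 + b ^+ 2 + c ^+ 2 - Num.sqrt 3 * Num.sqrt (heron a b c)).
Definition AX19sq a b c : R :=
  b * c * twoSA a b c ^+ 2
  * (b * c * (twoSA b c a ^+ 2 + twoSA c a b ^+ 2) + twoSA a b c * twoSA b c a * twoSA c a b)
  / (a * twoSA b c a * twoSA c a b + b * twoSA c a b * twoSA a b c
     + c * twoSA a b c * twoSA b c a) ^+ 2.

Definition AXsqs a b c : seq R :=
  [:: AX3sq a b c; AX9sq a b c; AX10sq a b c; AX2sq a b c; AX1sq a b c;
      AX6sq a b c; AX4sq a b c; AX19sq a b c; AX16sq a b c].

Lemma heron_rot a b c : heron b c a = heron a b c.
Proof. by rewrite /heron; ring. Qed.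

Lemma heron_swap a b c : heron a c b = heron a b c.
Proof. by rewrite /heron; ring. Qed.

Lemma AXsqs_swap a b c : AXsqs a c b = AXsqs a b c.
Proof.
rewrite /AXsqs /AX1sq /AX2sq /AX3sq /AX4sq /AX6sq /AX9sq /AX10sq /AX16sq /AX19sq.
rewrite /twoSA heron_swap.
by congr [:: _ / _; _ / _; _ / _; _ / _; _ / _; _ / _; _ / _; _ / _; _ / _]; ring.
Qed.

End ClosedForms.

(* In a sum the first summand must be positive and the others nonnegative. *)
Ltac pos := lazymatch goal with
  | |- is_true (0 < _%:R) => by rewrite ltr0n
  | |- is_true (0 < 1) => exact: ltr01
  | |- is_true (0 < _ * _) => apply: mulr_gt0; pos
  | |- is_true (0 < _ ^+ _) => apply: exprn_gt0; pos
  | |- is_true (0 < _^-1) => rewrite invr_gt0; pos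
  | |- _ => first [ assumption | apply: ltr_wpDr; [nonneg | pos] ]
  end
with nonneg := lazymatch goal with
  | |- is_true (0 <= _%:R) => exact: ler0n
  | |- is_true (0 <= _ * _) => apply: mulr_ge0; nonneg
  | |- is_true (0 <= _ ^+ _) => apply: exprn_ge0; nonneg
  | |- _ => first [ assumption | apply: addr_ge0; nonneg | apply: ltW; pos ]
  end.

Lemma ltr_pdiv_cross (R : numFieldType) (x1 y1 x2 y2 : R) :
  0 < y1 -> 0 < y2 -> 0 < x2 * y1 - x1 * y2 -> x1 / y1 < x2 / y2.
Proof. by move=> y1_gt0 y2_gt0; rewrite subr_gt0 ltr_pdivrMr // mulrAC ltr_pdivlMr. Qed.

Section AcuteSides.
Variable R : rcfType.
Implicit Types a b c : R.

Lemma lt_add_of_acute a b c : 0 <= b -> 0 <= c -> 0 < twoSA a b c -> a < b + c.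
Proof. rewrite /twoSA => b_ge0 c_ge0 acute; rewrite ltNge; apply/negP => le; nra. Qed.

Lemma heron_gt0 a b c : 0 < a -> 0 < b -> 0 < c ->
  0 < twoSA a b c -> 0 < twoSA b c a -> 0 < twoSA c a b -> 0 < heron a b c.
Proof.
move=> a_gt0 b_gt0 c_gt0 /lt_add_of_acute a_lt /lt_add_of_acute b_lt /lt_add_of_acute c_lt.
have -> : heron a b c = (a + b + c) * (b + c - a) * (c + a - b) * (a + b - c).
  by rewrite /heron; ring.
by rewrite !mulr_gt0 ?subr_gt0 ?addr_gt0 ?a_lt ?b_lt ?c_lt ?ltW.
Qed.

Lemma sqrt3_heron_lt a b c : 0 <= a -> 0 <= b -> a != b ->
  Num.sqrt 3 * Num.sqrt (heron a b c) < a ^+ 2 + b ^+ 2 + c ^+ 2.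
Proof.
move=> a_ge0 b_ge0 a_neq_b; set W := a ^+ 2 + b ^+ 2 + c ^+ 2.
have ab_gt0 : 0 < (a - b) ^+ 2 by rewrite exprn_even_gt0 //= subr_eq0.
have W_gt0 : 0 < W by rewrite /W; nra.
rewrite -sqrtrM ?ler0n // -(ger0_norm (ltW W_gt0)) -sqrtr_sqr ltr_sqrt ?exprn_gt0 //.
rewrite -subr_gt0 (_ : _ - _ =
  2 * ((a ^+ 2 - b ^+ 2) ^+ 2 + (b ^+ 2 - c ^+ 2) ^+ 2 + (c ^+ 2 - a ^+ 2) ^+ 2)); last first.
  by rewrite /W /heron; ring.
have : 0 < (a ^+ 2 - b ^+ 2) ^+ 2.
  rewrite exprn_even_gt0 //= subr_eq0 eqf_sqr negb_or a_neq_b /=.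
  by apply: contra a_neq_b => /eqP ab; apply/eqP; lra.
by have := sqr_ge0 (b ^+ 2 - c ^+ 2); have := sqr_ge0 (c ^+ 2 - a ^+ 2); lra.
Qed.

End AcuteSides.

Lemma twoSA_dist (R : rcfType) (A B C : point R) :
  twoSA (dist B C) (dist C A) (dist A B) = 2 * dotv A B C.
Proof. by rewrite /twoSA !dist_sqr /dotv; ring. Qed.

Lemma side_gt0 (R : rcfType) (a b c : R) :
  0 <= a -> 0 < twoSA b c a -> 0 < twoSA c a b -> 0 < a.
Proof.
rewrite /twoSA => a_ge0 hB hC; rewrite lt_neqAle a_ge0 andbT.
by apply/eqP => a0; nra.
Qed.

Section CenterDistances.
Variables (R : rcfType) (A B C : point R).
Hypothesis acute : acute_triangle A B C.
Local Notation a := (dist B C).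
Local Notation b := (dist C A).
Local Notation c := (dist A B).

Let SA_gt0 : 0 < b ^+ 2 + c ^+ 2 - a ^+ 2.
Proof. by case: acute => _ h _ _; rewrite -[_ - _]/(twoSA a b c) twoSA_dist mulr_gt0. Qed.
Let SB_gt0 : 0 < c ^+ 2 + a ^+ 2 - b ^+ 2.
Proof. by case: acute => _ _ h _; rewrite -[_ - _]/(twoSA b c a) twoSA_dist mulr_gt0. Qed.
Let SC_gt0 : 0 < a ^+ 2 + b ^+ 2 - c ^+ 2.
Proof. by case: acute => _ _ _ h; rewrite -[_ - _]/(twoSA c a b) twoSA_dist mulr_gt0. Qed.
Let a_gt0 : 0 < a. Proof. exact: side_gt0 (sqrtr_ge0 _) SB_gt0 SC_gt0. Qed.
Let b_gt0 : 0 < b. Proof. exact: side_gt0 (sqrtr_ge0 _) SC_gt0 SA_gt0. Qed.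
Let c_gt0 : 0 < c. Proof. exact: side_gt0 (sqrtr_ge0 _) SA_gt0 SB_gt0. Qed.
Let bca_gt0 : 0 < b + c - a. Proof. by rewrite subr_gt0 lt_add_of_acute ?ltW. Qed.
Let cab_gt0 : 0 < c + a - b. Proof. by rewrite subr_gt0 lt_add_of_acute ?ltW. Qed.
Let abc_gt0 : 0 < a + b - c. Proof. by rewrite subr_gt0 lt_add_of_acute ?ltW. Qed.
Let heron_pos : 0 < heron a b c.
Proof. exact: heron_gt0. Qed.

Ltac nonzero := repeat (apply/andP; split); first [done | apply: lt0r_neq0; pos].
Ltac sqdistA_field := congr Num.sqrt; rewrite /sqdistA; field; nonzero.
Ltac wsum_neq0 := apply: (@lt0r_neq0 R); pos.

Lemma dist_X1 : dist A (bary (@X1 R) A B C) = Num.sqrt (AX1sq a b c).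
Proof. by rewrite dist_bary /X1 /AX1sq; [sqdistA_field | wsum_neq0]. Qed.
Lemma dist_X2 : dist A (bary (@X2 R) A B C) = Num.sqrt (AX2sq a b c).
Proof. by rewrite dist_bary /X2 /AX2sq; [sqdistA_field | wsum_neq0]. Qed.
Lemma dist_X3 : dist A (bary (@X3 R) A B C) = Num.sqrt (AX3sq a b c).
Proof. by rewrite dist_bary /X3 /AX3sq /heron; [sqdistA_field | wsum_neq0]. Qed.
Lemma dist_X4 : dist A (bary (@X4 R) A B C) = Num.sqrt (AX4sq a b c).
Proof. by rewrite dist_bary /X4 /AX4sq /twoSA /heron; [sqdistA_field | wsum_neq0]. Qed.
Lemma dist_X6 : dist A (bary (@X6 R) A B C) = Num.sqrt (AX6sq a b c).
Proof. by rewrite dist_bary /X6 /AX6sq; [sqdistA_field | wsum_neq0]. Qed.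
Lemma dist_X9 : dist A (bary (@X9 R) A B C) = Num.sqrt (AX9sq a b c).
Proof. by rewrite dist_bary /X9 /AX9sq; [sqdistA_field | wsum_neq0]. Qed.
Lemma dist_X10 : dist A (bary (@X10 R) A B C) = Num.sqrt (AX10sq a b c).
Proof. by rewrite dist_bary /X10 /AX10sq; [sqdistA_field | wsum_neq0]. Qed.
Lemma dist_X19 : dist A (bary (@X19 R) A B C) = Num.sqrt (AX19sq a b c).
Proof. by rewrite dist_bary /X19 /AX19sq /twoSA; [sqdistA_field | wsum_neq0]. Qed.

Lemma dist_X16 : a != b -> dist A (bary (@X16 R) A B C) = Num.sqrt (AX16sq a b c).
Proof.
move=> a_neq_b.
have W_gt0 := sqrt3_heron_lt c (ltW a_gt0) (ltW b_gt0) a_neq_b.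
rewrite -subr_gt0 in W_gt0.
rewrite /AX16sq; set T := Num.sqrt (heron a b c); set r := Num.sqrt 3.
set W := _ - r * T in W_gt0 *.
have T_gt0 : 0 < T by rewrite sqrtr_gt0.
have [wsumE numE] : X16 a b c + X16 b c a + X16 c a b = T * W / 2 /\
    X16 b c a ^+ 2 * c ^+ 2 + X16 c a b ^+ 2 * b ^+ 2
    + X16 b c a * X16 c a b * (b ^+ 2 + c ^+ 2 - a ^+ 2) = b ^+ 2 * c ^+ 2 * T ^+ 2 * W / 2.
  have T2 : T ^+ 2 = heron a b c by rewrite sqr_sqrtr ?ltW.
  have r2 : r ^+ 2 = 3 by rewrite sqr_sqrtr ?ler0n.
  rewrite /X16 /SA /Sarea -/(heron a b c) -/(heron b c a) -/(heron c a b).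
  rewrite (heron_rot a b c) -(heron_rot c a b) -/T -/r /W; clearbody T r.
  (* Both differences are combinations of T ^+ 2 - heron a b c and r ^+ 2 - 3. *)
  split; apply/eqP; rewrite -subr_eq0.
    rewrite [X in X == 0](_ : _ = r * (T ^+ 2 - heron a b c) / 2); last first.
      by rewrite /heron; field.
    by rewrite T2 subrr mulr0 mul0r.
  rewrite [X in X == 0](_ : _ = b ^+ 2 * c ^+ 2 / 4 * ((T ^+ 2 - heron a b c)
    * (2 * r * T - 3 * a ^+ 2) + (r ^+ 2 - 3) * a ^+ 2 * heron a b c)).
    by rewrite T2 r2 !subrr !mul0r add0r mulr0.
  by rewrite /heron; field.
rewrite dist_bary; last by rewrite wsumE; wsum_neq0.
by congr Num.sqrt; rewrite /sqdistA numE wsumE; field; nonzero.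
Qed.

End CenterDistances.

Section Ordering.
Variables (R : rcfType) (a b c : R).
Hypotheses (a_ge0 : 0 <= a) (a_lt_b : a < b) (b_le_c : b <= c)
  (acute_C : c ^+ 2 < a ^+ 2 + b ^+ 2).

(* a = t + s, b = t + s + k, c = t + 2s + k and m = t^2 - 2s^2 - 2sk; the
   certificates below are polynomials in t, s, k, m with nonnegative coefficients.
   Coefficients above 5000 are written q * 1000 + r, as numerals are unary nats. *)
Local Notation t := (a + b - c).
Local Notation s := (c - b).
Local Notation k := (b - a).
Local Notation m := (a ^+ 2 + b ^+ 2 - c ^+ 2).
Local Notation Y := (a * b + b * c + c * a).

Let s_ge0 : 0 <= s. Proof. by rewrite subr_ge0. Qed.
Let k_gt0 : 0 < k. Proof. by rewrite subr_gt0. Qed.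
Let m_gt0 : 0 < m. Proof. by rewrite subr_gt0. Qed.
Let b_gt0 : 0 < b. Proof. exact: le_lt_trans a_lt_b. Qed.
Let c_gt0 : 0 < c. Proof. exact: lt_le_trans b_le_c. Qed.
Let t_gt0 : 0 < t.
Proof. by rewrite subr_gt0; apply: lt_add_of_acute => //; apply: ltW. Qed.
Let a_gt0 : 0 < a. Proof. by have ? := t_gt0; have ? := b_le_c; lra. Qed.
Let SA_gt0 : 0 < twoSA a b c.
Proof. by rewrite /twoSA; have ? := a_gt0; have ? := a_lt_b; have ? := b_le_c; nra. Qed.
Let SB_gt0 : 0 < twoSA b c a.
Proof. by rewrite /twoSA; have ? := a_gt0; have ? := b_gt0; have ? := b_le_c; nra. Qed.
Let SC_gt0 : 0 < twoSA c a b. Proof. exact: m_gt0. Qed.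
Let bca_gt0 : 0 < b + c - a. Proof. by have ? := a_lt_b; have ? := c_gt0; lra. Qed.
Let cab_gt0 : 0 < c + a - b. Proof. by have ? := a_gt0; have ? := b_le_c; lra. Qed.
Let heron_pos : 0 < heron a b c. Proof. exact: heron_gt0. Qed.

Lemma AX3sq_lt_AX9sq : AX3sq a b c < AX9sq a b c.
Proof.
rewrite /AX3sq /AX9sq; apply: ltr_pdiv_cross; [pos | pos |].
rewrite [X in 0 < X](_ : _ = b * c * (
  8 * t * k ^+ 3 * m ^+ 2 + 6 * t * k * m ^+ 3 + 15 * k ^+ 2 * m ^+ 3 +
  396 * t * s ^+ 7 + 1728 * t * s ^+ 6 * k + 2740 * t * s ^+ 5 * k ^+ 2 +
  464 * t * s ^+ 5 * m + 1912 * t * s ^+ 4 * k ^+ 3 + 1484 * t * s ^+ 4 * k * m +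
  536 * t * s ^+ 3 * k ^+ 4 + 1524 * t * s ^+ 3 * k ^+ 2 * m +
  111 * t * s ^+ 3 * m ^+ 2 + 32 * t * s ^+ 2 * k ^+ 5 +
  536 * t * s ^+ 2 * k ^+ 3 * m + 262 * t * s ^+ 2 * k * m ^+ 2 +
  32 * t * s * k ^+ 4 * m + 138 * t * s * k ^+ 2 * m ^+ 2 + 3 * t * s * m ^+ 3 +
  560 * s ^+ 8 + 2724 * s ^+ 7 * k + (5 * 1000 + 28) * s ^+ 6 * k ^+ 2 +
  796 * s ^+ 6 * m + 4372 * s ^+ 5 * k ^+ 3 + 2968 * s ^+ 5 * k * m +
  1756 * s ^+ 4 * k ^+ 4 + 3840 * s ^+ 4 * k ^+ 2 * m + 304 * s ^+ 4 * m ^+ 2 +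
  248 * s ^+ 3 * k ^+ 5 + 1992 * s ^+ 3 * k ^+ 3 * m + 841 * s ^+ 3 * k * m ^+ 2 +
  324 * s ^+ 2 * k ^+ 4 * m + 659 * s ^+ 2 * k ^+ 2 * m ^+ 2 + 27 * s ^+ 2 * m ^+ 3 +
  130 * s * k ^+ 3 * m ^+ 2 + 57 * s * k * m ^+ 3)); first by pos.
by rewrite /twoSA /heron; ring.
Qed.

Lemma AX9sq_lt_AX10sq : AX9sq a b c < AX10sq a b c.
Proof.
rewrite /AX9sq /AX10sq; apply: ltr_pdiv_cross; [pos | pos |].
rewrite [X in 0 < X](_ : _ = t * (
  12 * t ^+ 5 * k + 45 * t ^+ 4 * k ^+ 2 + 50 * t ^+ 3 * k ^+ 3 +
  16 * t ^+ 2 * k ^+ 4 + 6 * t ^+ 5 * s + 45 * t ^+ 4 * s ^+ 2 +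
  117 * t ^+ 4 * s * k + 128 * t ^+ 3 * s ^+ 3 + 416 * t ^+ 3 * s ^+ 2 * k +
  300 * t ^+ 3 * s * k ^+ 2 + 168 * t ^+ 2 * s ^+ 4 + 672 * t ^+ 2 * s ^+ 3 * k +
  704 * t ^+ 2 * s ^+ 2 * k ^+ 2 + 232 * t ^+ 2 * s * k ^+ 3 + 96 * t * s ^+ 5 +
  480 * t * s ^+ 4 * k + 672 * t * s ^+ 3 * k ^+ 2 + 336 * t * s ^+ 2 * k ^+ 3 +
  48 * t * s * k ^+ 4 + 16 * s ^+ 6 + 112 * s ^+ 5 * k + 208 * s ^+ 4 * k ^+ 2 +
  144 * s ^+ 3 * k ^+ 3 + 32 * s ^+ 2 * k ^+ 4)); first by pos.
by rewrite /twoSA /heron; ring.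
Qed.

Lemma AX10sq_lt_AX2sq : AX10sq a b c < AX2sq a b c.
Proof.
rewrite /AX10sq /AX2sq; apply: ltr_pdiv_cross; [pos | pos |].
rewrite [X in 0 < X](_ : _ = (
  12 * t ^+ 2 * k + 31 * t * k ^+ 2 + 14 * k ^+ 3 + 6 * t ^+ 2 * s + 7 * t * s ^+ 2 +
  55 * t * s * k + 48 * s ^+ 2 * k + 52 * s * k ^+ 2)); first by pos.
by rewrite /twoSA /heron; ring.
Qed.

Lemma AX2sq_lt_AX1sq : AX2sq a b c < AX1sq a b c.
Proof.
rewrite /AX2sq /AX1sq; apply: ltr_pdiv_cross; [pos | pos |].
rewrite [X in 0 < X](_ : _ = (
  6 * t ^+ 2 * k + 17 * t * k ^+ 2 + 10 * k ^+ 3 + 3 * t ^+ 2 * s + 5 * t * s ^+ 2 +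
  29 * t * s * k + 24 * s ^+ 2 * k + 32 * s * k ^+ 2)); first by pos.
by rewrite /twoSA /heron; ring.
Qed.

Lemma AX1sq_lt_AX6sq : AX1sq a b c < AX6sq a b c.
Proof.
rewrite /AX1sq /AX6sq; apply: ltr_pdiv_cross; [pos | pos |].
rewrite [X in 0 < X](_ : _ = b * c * (
  6 * t ^+ 4 * k + 21 * t ^+ 3 * k ^+ 2 + 22 * t ^+ 2 * k ^+ 3 + 8 * t * k ^+ 4 +
  3 * t ^+ 4 * s + 15 * t ^+ 3 * s ^+ 2 + 45 * t ^+ 3 * s * k +
  25 * t ^+ 2 * s ^+ 3 + 106 * t ^+ 2 * s ^+ 2 * k + 96 * t ^+ 2 * s * k ^+ 2 +
  14 * t * s ^+ 4 + 95 * t * s ^+ 3 * k + 131 * t * s ^+ 2 * k ^+ 2 +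
  60 * t * s * k ^+ 3 + 24 * s ^+ 4 * k + 50 * s ^+ 3 * k ^+ 2 +
  34 * s ^+ 2 * k ^+ 3 + 8 * s * k ^+ 4)); first by pos.
by rewrite /twoSA /heron; ring.
Qed.

Lemma AX6sq_lt_AX4sq : AX6sq a b c < AX4sq a b c.
Proof.
rewrite /AX6sq /AX4sq; apply: ltr_pdiv_cross; [pos | pos |].
rewrite [X in 0 < X](_ : _ = (
  12 * t ^+ 9 * k + 66 * t ^+ 8 * k ^+ 2 + 124 * t ^+ 7 * k ^+ 3 +
  111 * t ^+ 6 * k ^+ 4 + 48 * t ^+ 5 * k ^+ 5 + 8 * t ^+ 4 * k ^+ 6 +
  6 * t ^+ 9 * s + 93 * t ^+ 8 * s ^+ 2 + 174 * t ^+ 8 * s * k +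
  636 * t ^+ 7 * s ^+ 3 + 1238 * t ^+ 7 * s ^+ 2 * k + 714 * t ^+ 7 * s * k ^+ 2 +
  2517 * t ^+ 6 * s ^+ 4 + (5 * 1000 + 470) * t ^+ 6 * s ^+ 3 * k +
  3929 * t ^+ 6 * s ^+ 2 * k ^+ 2 + 1090 * t ^+ 6 * s * k ^+ 3 +
  (6 * 1000 + 348) * t ^+ 5 * s ^+ 5 + (15 * 1000 + 930) * t ^+ 5 * s ^+ 4 * k +
  (14 * 1000 + 28) * t ^+ 5 * s ^+ 3 * k ^+ 2 +
  (5 * 1000 + 184) * t ^+ 5 * s ^+ 2 * k ^+ 3 + 786 * t ^+ 5 * s * k ^+ 4 +
  (10 * 1000 + 572) * t ^+ 4 * s ^+ 6 + (30 * 1000 + 912) * t ^+ 4 * s ^+ 5 * k +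
  (33 * 1000 + 529) * t ^+ 4 * s ^+ 4 * k ^+ 2 +
  (16 * 1000 + 526) * t ^+ 4 * s ^+ 3 * k ^+ 3 + 3593 * t ^+ 4 * s ^+ 2 * k ^+ 4 +
  264 * t ^+ 4 * s * k ^+ 5 + (11 * 1000 + 616) * t ^+ 3 * s ^+ 7 +
  (39 * 1000 + 424) * t ^+ 3 * s ^+ 6 * k +
  (52 * 1000 + 272) * t ^+ 3 * s ^+ 5 * k ^+ 2 +
  (34 * 1000 + 104) * t ^+ 3 * s ^+ 4 * k ^+ 3 +
  (11 * 1000 + 152) * t ^+ 3 * s ^+ 3 * k ^+ 4 + 1544 * t ^+ 3 * s ^+ 2 * k ^+ 5 +
  32 * t ^+ 3 * s * k ^+ 6 + (8 * 1000 + 112) * t ^+ 2 * s ^+ 8 +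
  (31 * 1000 + 664) * t ^+ 2 * s ^+ 7 * k +
  (50 * 1000 + 484) * t ^+ 2 * s ^+ 6 * k ^+ 2 +
  (42 * 1000 + 300) * t ^+ 2 * s ^+ 5 * k ^+ 3 +
  (19 * 1000 + 768) * t ^+ 2 * s ^+ 4 * k ^+ 4 + 4908 * t ^+ 2 * s ^+ 3 * k ^+ 5 +
  508 * t ^+ 2 * s ^+ 2 * k ^+ 6 + 3264 * t * s ^+ 9 +
  (14 * 1000 + 496) * t * s ^+ 8 * k + (27 * 1000 + 280) * t * s ^+ 7 * k ^+ 2 +
  (28 * 1000 + 360) * t * s ^+ 6 * k ^+ 3 + (17 * 1000 + 688) * t * s ^+ 5 * k ^+ 4 +
  (6 * 1000 + 648) * t * s ^+ 4 * k ^+ 5 + 1400 * t * s ^+ 3 * k ^+ 6 +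
  128 * t * s ^+ 2 * k ^+ 7 + 576 * s ^+ 10 + 2880 * s ^+ 9 * k +
  (6 * 1000 + 288) * s ^+ 8 * k ^+ 2 + (7 * 1000 + 872) * s ^+ 7 * k ^+ 3 +
  (6 * 1000 + 208) * s ^+ 6 * k ^+ 4 + 3168 * s ^+ 5 * k ^+ 5 +
  1024 * s ^+ 4 * k ^+ 6 + 192 * s ^+ 3 * k ^+ 7 + 16 * s ^+ 2 * k ^+ 8)); first by pos.
by rewrite /twoSA /heron; ring.
Qed.

Lemma AX4sq_lt_AX19sq : AX4sq a b c < AX19sq a b c.
Proof.
rewrite /AX4sq /AX19sq; apply: ltr_pdiv_cross; [pos | pos |].
rewrite [X in 0 < X](_ : _ = twoSA a b c ^+ 2 * twoSA b c a * twoSA c a b * (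
  6 * t ^+ 7 * k + 21 * t ^+ 6 * k ^+ 2 + 24 * t ^+ 5 * k ^+ 3 +
  8 * t ^+ 4 * k ^+ 4 + 3 * t ^+ 7 * s + 33 * t ^+ 6 * s ^+ 2 + 63 * t ^+ 6 * s * k +
  152 * t ^+ 5 * s ^+ 3 + 298 * t ^+ 5 * s ^+ 2 * k + 162 * t ^+ 5 * s * k ^+ 2 +
  378 * t ^+ 4 * s ^+ 4 + 808 * t ^+ 4 * s ^+ 3 * k +
  556 * t ^+ 4 * s ^+ 2 * k ^+ 2 + 136 * t ^+ 4 * s * k ^+ 3 +
  544 * t ^+ 3 * s ^+ 5 + 1316 * t ^+ 3 * s ^+ 4 * k +
  1084 * t ^+ 3 * s ^+ 3 * k ^+ 2 + 344 * t ^+ 3 * s ^+ 2 * k ^+ 3 +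
  32 * t ^+ 3 * s * k ^+ 4 + 448 * t ^+ 2 * s ^+ 6 + 1244 * t ^+ 2 * s ^+ 5 * k +
  1216 * t ^+ 2 * s ^+ 4 * k ^+ 2 + 480 * t ^+ 2 * s ^+ 3 * k ^+ 3 +
  60 * t ^+ 2 * s ^+ 2 * k ^+ 4 + 192 * t * s ^+ 7 + 608 * t * s ^+ 6 * k +
  696 * t * s ^+ 5 * k ^+ 2 + 336 * t * s ^+ 4 * k ^+ 3 + 56 * t * s ^+ 3 * k ^+ 4 +
  32 * s ^+ 8 + 112 * s ^+ 7 * k + 144 * s ^+ 6 * k ^+ 2 + 80 * s ^+ 5 * k ^+ 3 +
  16 * s ^+ 4 * k ^+ 4)); first by pos.
by rewrite /twoSA /heron; ring.
Qed.

Lemma heron_lt_Ysq : 3 * heron a b c < Y ^+ 2.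
Proof.
rewrite -subr_gt0 [X in 0 < X](_ : _ =
  10 * t ^+ 2 * k ^+ 2 + 8 * t * k ^+ 3 + k ^+ 4 + 10 * t ^+ 2 * s ^+ 2 +
  10 * t ^+ 2 * s * k + 32 * t * s ^+ 3 + 48 * t * s ^+ 2 * k + 32 * t * s * k ^+ 2 +
  25 * s ^+ 4 + 50 * s ^+ 3 * k + 35 * s ^+ 2 * k ^+ 2 + 10 * s * k ^+ 3); first by pos.
by rewrite /heron; ring.
Qed.

Let sumsq_ge_Y : Y <= a ^+ 2 + b ^+ 2 + c ^+ 2.
Proof.
by have := sqr_ge0 (a - b); have := sqr_ge0 (b - c); have := sqr_ge0 (c - a); nra.
Qed.

Let sqrt3_heron_lt_Y : Num.sqrt 3 * Num.sqrt (heron a b c) < Y.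
Proof.
have : (Num.sqrt 3 * Num.sqrt (heron a b c)) ^+ 2 < Y ^+ 2.
  by rewrite exprMn !sqr_sqrtr ?ler0n ?ltW // heron_lt_Ysq.
have := mulr_ge0 (sqrtr_ge0 (3 : R)) (sqrtr_ge0 (heron a b c)).
have Y_gt0 : 0 < Y by pos.
rewrite ltNge => r_ge0 r2_lt; apply/negP => Y_le; nra.
Qed.

Let bound_den_gt0 : 0 < Y * (a ^+ 2 + b ^+ 2 + c ^+ 2) - 3 * heron a b c.
Proof.
have ? := heron_lt_Ysq; have ? := sumsq_ge_Y; have ? : 0 < Y by pos.
nra.
Qed.

Lemma AX19sq_lt_bound : AX19sq a b c <
  2 * b ^+ 2 * c ^+ 2 * Y / (Y * (a ^+ 2 + b ^+ 2 + c ^+ 2) - 3 * heron a b c).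
Proof.
rewrite /AX19sq; apply: ltr_pdiv_cross; [pos | pos |].
rewrite [X in 0 < X](_ : _ = b * c * (
  54 * t ^+ 14 + 540 * t ^+ 13 * k + 2409 * t ^+ 12 * k ^+ 2 +
  (6 * 1000 + 120) * t ^+ 11 * k ^+ 3 + (9 * 1000 + 436) * t ^+ 10 * k ^+ 4 +
  (8 * 1000 + 856) * t ^+ 9 * k ^+ 5 + 4908 * t ^+ 8 * k ^+ 6 +
  1472 * t ^+ 7 * k ^+ 7 + 184 * t ^+ 6 * k ^+ 8 + 1026 * t ^+ 13 * s +
  (8 * 1000 + 943) * t ^+ 12 * s ^+ 2 + (9 * 1000 + 429) * t ^+ 12 * s * k +
  (47 * 1000 + 376) * t ^+ 11 * s ^+ 3 + (74 * 1000 + 952) * t ^+ 11 * s ^+ 2 * k +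
  (38 * 1000 + 88) * t ^+ 11 * s * k ^+ 2 + (170 * 1000 + 260) * t ^+ 10 * s ^+ 4 +
  (358 * 1000 + 928) * t ^+ 10 * s ^+ 3 * k +
  (271 * 1000 + 740) * t ^+ 10 * s ^+ 2 * k ^+ 2 +
  (86 * 1000 + 192) * t ^+ 10 * s * k ^+ 3 + (438 * 1000 + 336) * t ^+ 9 * s ^+ 5 +
  (1153 * 1000 + 868) * t ^+ 9 * s ^+ 4 * k +
  (1156 * 1000 + 344) * t ^+ 9 * s ^+ 3 * k ^+ 2 +
  (542 * 1000 + 616) * t ^+ 9 * s ^+ 2 * k ^+ 3 +
  (116 * 1000 + 500) * t ^+ 9 * s * k ^+ 4 + (830 * 1000 + 880) * t ^+ 8 * s ^+ 6 +
  (2623 * 1000 + 112) * t ^+ 8 * s ^+ 5 * k +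
  (3264 * 1000 + 316) * t ^+ 8 * s ^+ 4 * k ^+ 2 +
  (2015 * 1000 + 812) * t ^+ 8 * s ^+ 3 * k ^+ 3 +
  (636 * 1000 + 704) * t ^+ 8 * s ^+ 2 * k ^+ 4 +
  (94 * 1000 + 428) * t ^+ 8 * s * k ^+ 5 + (1170 * 1000 + 700) * t ^+ 7 * s ^+ 7 +
  (4318 * 1000 + 36) * t ^+ 7 * s ^+ 6 * k +
  (6420 * 1000 + 780) * t ^+ 7 * s ^+ 5 * k ^+ 2 +
  (4905 * 1000 + 48) * t ^+ 7 * s ^+ 4 * k ^+ 3 +
  (2031 * 1000 + 512) * t ^+ 7 * s ^+ 3 * k ^+ 4 +
  (441 * 1000 + 584) * t ^+ 7 * s ^+ 2 * k ^+ 5 +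
  (44 * 1000 + 416) * t ^+ 7 * s * k ^+ 6 + (1218 * 1000 + 608) * t ^+ 6 * s ^+ 8 +
  (5168 * 1000 + 644) * t ^+ 6 * s ^+ 7 * k +
  (8972 * 1000 + 688) * t ^+ 6 * s ^+ 6 * k ^+ 2 +
  (8185 * 1000 + 520) * t ^+ 6 * s ^+ 5 * k ^+ 3 +
  (4193 * 1000 + 604) * t ^+ 6 * s ^+ 4 * k ^+ 4 +
  (1195 * 1000 + 440) * t ^+ 6 * s ^+ 3 * k ^+ 5 +
  (175 * 1000 + 824) * t ^+ 6 * s ^+ 2 * k ^+ 6 +
  (11 * 1000 + 40) * t ^+ 6 * s * k ^+ 7 + (915 * 1000) * t ^+ 5 * s ^+ 9 +
  (4438 * 1000 + 752) * t ^+ 5 * s ^+ 8 * k +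
  (8898 * 1000 + 192) * t ^+ 5 * s ^+ 7 * k ^+ 2 +
  (9519 * 1000 + 144) * t ^+ 5 * s ^+ 6 * k ^+ 3 +
  (5856 * 1000 + 568) * t ^+ 5 * s ^+ 5 * k ^+ 4 +
  (2080 * 1000 + 232) * t ^+ 5 * s ^+ 4 * k ^+ 5 +
  (404 * 1000 + 840) * t ^+ 5 * s ^+ 3 * k ^+ 6 +
  (37 * 1000 + 552) * t ^+ 5 * s ^+ 2 * k ^+ 7 + 1104 * t ^+ 5 * s * k ^+ 8 +
  (472 * 1000 + 336) * t ^+ 4 * s ^+ 10 + (2650 * 1000 + 40) * t ^+ 4 * s ^+ 9 * k +
  (6157 * 1000 + 544) * t ^+ 4 * s ^+ 8 * k ^+ 2 +
  (7705 * 1000 + 184) * t ^+ 4 * s ^+ 7 * k ^+ 3 +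
  (5641 * 1000 + 352) * t ^+ 4 * s ^+ 6 * k ^+ 4 +
  (2452 * 1000 + 64) * t ^+ 4 * s ^+ 5 * k ^+ 5 +
  (610 * 1000 + 720) * t ^+ 4 * s ^+ 4 * k ^+ 6 +
  (78 * 1000 + 672) * t ^+ 4 * s ^+ 3 * k ^+ 7 + 4008 * t ^+ 4 * s ^+ 2 * k ^+ 8 +
  (154 * 1000 + 496) * t ^+ 3 * s ^+ 11 + (1053 * 1000 + 24) * t ^+ 3 * s ^+ 10 * k +
  (2917 * 1000 + 200) * t ^+ 3 * s ^+ 9 * k ^+ 2 +
  (4342 * 1000 + 736) * t ^+ 3 * s ^+ 8 * k ^+ 3 +
  (3822 * 1000 + 912) * t ^+ 3 * s ^+ 7 * k ^+ 4 +
  (2046 * 1000) * t ^+ 3 * s ^+ 6 * k ^+ 5 +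
  (654 * 1000 + 320) * t ^+ 3 * s ^+ 5 * k ^+ 6 +
  (116 * 1000 + 960) * t ^+ 3 * s ^+ 4 * k ^+ 7 +
  (10 * 1000 + 112) * t ^+ 3 * s ^+ 3 * k ^+ 8 + 320 * t ^+ 3 * s ^+ 2 * k ^+ 9 +
  (29 * 1000 + 568) * t ^+ 2 * s ^+ 12 + (280 * 1000) * t ^+ 2 * s ^+ 11 * k +
  (978 * 1000 + 336) * t ^+ 2 * s ^+ 10 * k ^+ 2 +
  (1783 * 1000 + 824) * t ^+ 2 * s ^+ 9 * k ^+ 3 +
  (1922 * 1000 + 112) * t ^+ 2 * s ^+ 8 * k ^+ 4 +
  (1282 * 1000 + 864) * t ^+ 2 * s ^+ 7 * k ^+ 5 +
  (531 * 1000 + 728) * t ^+ 2 * s ^+ 6 * k ^+ 6 +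
  (131 * 1000 + 808) * t ^+ 2 * s ^+ 5 * k ^+ 7 +
  (17 * 1000 + 840) * t ^+ 2 * s ^+ 4 * k ^+ 8 + 1120 * t ^+ 2 * s ^+ 3 * k ^+ 9 +
  32 * t ^+ 2 * s ^+ 2 * k ^+ 10 + 4992 * t * s ^+ 13 +
  (64 * 1000 + 384) * t * s ^+ 12 * k + (271 * 1000 + 840) * t * s ^+ 11 * k ^+ 2 +
  (585 * 1000 + 984) * t * s ^+ 10 * k ^+ 3 +
  (750 * 1000 + 400) * t * s ^+ 9 * k ^+ 4 +
  (607 * 1000 + 360) * t * s ^+ 8 * k ^+ 5 +
  (315 * 1000 + 968) * t * s ^+ 7 * k ^+ 6 +
  (103 * 1000 + 680) * t * s ^+ 6 * k ^+ 7 +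
  (20 * 1000 + 128) * t * s ^+ 5 * k ^+ 8 + 1984 * t * s ^+ 4 * k ^+ 9 +
  64 * t * s ^+ 3 * k ^+ 10 + 1280 * s ^+ 14 + (13 * 1000 + 440) * s ^+ 13 * k +
  (55 * 1000 + 616) * s ^+ 12 * k ^+ 2 + (125 * 1000 + 792) * s ^+ 11 * k ^+ 3 +
  (176 * 1000 + 160) * s ^+ 10 * k ^+ 4 + (161 * 1000 + 472) * s ^+ 9 * k ^+ 5 +
  (98 * 1000 + 752) * s ^+ 8 * k ^+ 6 + (39 * 1000 + 936) * s ^+ 7 * k ^+ 7 +
  (10 * 1000 + 240) * s ^+ 6 * k ^+ 8 + 1504 * s ^+ 5 * k ^+ 9 +
  96 * s ^+ 4 * k ^+ 10)); first by pos.
by rewrite /twoSA /heron; ring.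
Qed.

Lemma bound_le_AX16sq :
  2 * b ^+ 2 * c ^+ 2 * Y / (Y * (a ^+ 2 + b ^+ 2 + c ^+ 2) - 3 * heron a b c)
  <= AX16sq a b c.
Proof.
have r2 : (Num.sqrt 3 * Num.sqrt (heron a b c)) ^+ 2 = 3 * heron a b c.
  by rewrite exprMn !sqr_sqrtr ?ler0n ?ltW.
have r_ge0 := mulr_ge0 (sqrtr_ge0 (3 : R)) (sqrtr_ge0 (heron a b c)).
have r_lt_Y := sqrt3_heron_lt_Y; have Y_le := sumsq_ge_Y.
rewrite /AX16sq -r2; move: (Num.sqrt 3 * _) r_ge0 r_lt_Y => r r_ge0 r_lt_Y.
have Yr_gt0 : 0 < Y - r by rewrite subr_gt0.
have Y_gt0 : 0 < Y by pos.
have W_gt0 : 0 < a ^+ 2 + b ^+ 2 + c ^+ 2 - r by lra.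
have D_gt0 : 0 < Y * (a ^+ 2 + b ^+ 2 + c ^+ 2) - r ^+ 2 by nra.
rewrite ler_pdivrMr // [X in _ <= X]mulrAC ler_pdivlMr // -subr_ge0.
by rewrite [X in 0 <= X](_ : _ = 2 * b ^+ 2 * c ^+ 2 * r * (Y - r)); [nonneg | ring].
Qed.

Lemma AXsqs_path_le : path <%R 0 (AXsqs a b c).
Proof.
rewrite /= AX3sq_lt_AX9sq AX9sq_lt_AX10sq AX10sq_lt_AX2sq AX2sq_lt_AX1sq AX1sq_lt_AX6sq.
rewrite AX6sq_lt_AX4sq AX4sq_lt_AX19sq (lt_le_trans AX19sq_lt_bound bound_le_AX16sq) !andbT.
by rewrite /AX3sq; pos.
Qed.

End Ordering.

Lemma AXsqs_path (R : rcfType) (a b c : R) :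
  0 <= a -> a < b -> a < c -> b ^+ 2 < a ^+ 2 + c ^+ 2 -> c ^+ 2 < a ^+ 2 + b ^+ 2 ->
  path <%R 0 (AXsqs a b c).
Proof.
move=> a_ge0; wlog b_le_c : b c / b <= c => [hwlog ab ac hB hC|ab _ _ hC].
  have [bc|/ltW cb] := leP b c; first exact: hwlog.
  by rewrite -AXsqs_swap; apply: hwlog.
exact: AXsqs_path_le.
Qed.

Lemma sorted_sqrt (R : rcfType) (s : seq R) : path <%R 0 s -> sorted <%R (map Num.sqrt s).
Proof.
move=> s_path; have s_pos := order_path_min lt_trans s_path.
apply: (homo_sorted_in _ s_pos (path_sorted s_path)) => x y _ y_gt0 /=.
by rewrite ltr_sqrt.
Qed.

Lemma acute_triangle_sqr_lt (R : rcfType) (A B C : point R) : acute_triangle A B C ->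
  dist C A ^+ 2 < dist B C ^+ 2 + dist A B ^+ 2 /\
  dist A B ^+ 2 < dist B C ^+ 2 + dist C A ^+ 2.
Proof.
case=> _ _ hB hC; have := twoSA_dist B C A; have := twoSA_dist C A B.
by rewrite /twoSA => eC eB; split; lra.
Qed.

Theorem theorem4p1 (R : rcfType) (A B C : point R) :
  acute_triangle A B C ->
  dist B C < dist C A -> dist B C < dist A B ->
  let d f := dist A (bary f A B C) in
  d (@X3 R) < d (@X9 R) /\ d (@X9 R) < d (@X10 R) /\ d (@X10 R) < d (@X2 R) /\
  d (@X2 R) < d (@X1 R) /\ d (@X1 R) < d (@X6 R) /\ d (@X6 R) < d (@X4 R) /\
  d (@X4 R) < d (@X19 R) /\ d (@X19 R) < d (@X16 R).
Proof.
move=> acute a_lt_b a_lt_c d.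
have [hB hC] := acute_triangle_sqr_lt acute.
have := sorted_sqrt (AXsqs_path (sqrtr_ge0 _) a_lt_b a_lt_c hB hC).
rewrite /= -!(dist_X1, dist_X2, dist_X3, dist_X4, dist_X6, dist_X9, dist_X10, dist_X19) //.
rewrite -dist_X16 // ?lt_eqF //.
by case/and5P=> ? ? ? ? /and4P[? ? ? /andP[? _]]; do !split.
Qed.
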